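(* Under the hypotheses: $(\boldsymbol\Sigma,\sigma)$ is a primitive Markov subshift on a countable alphabet with associated $\mathbb F$, $K_0$; $A:\boldsymbol\Sigma\to\mathbb R$ is bounded above, locally H\''older continuous with constant $H_A$, and $\inf A|_{\bigcup_{i\in\mathbb F}[i]}>-\infty$. Define $$u_A(\mathbf x)=\sup\{S_k(A-\beta_A)(\mathbf y):k\ge0,\ \mathbf y\in\boldsymbol\Sigma,\ \sigma^k(\mathbf y)=\mathbf x\}.$$ Then for all $\mathbf x\in\boldsymbol\Sigma$, $$0\le u_A(\mathbf x)\le\max\Big\{\mathrm{Var}(A)+K_0\big(\sup A-\inf A|_{\bigcup_{i\in\mathbb F}[i]}\big),\ K_0(\sup A-\beta_A)\Big\},$$ $A+u_A-u_A\circ\sigma\le\beta_A$, and $\mathrm{Var}_k(u_A)\le\frac{H_A}{1-\lambda}\lambda^k$ for all $k\ge1$.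
   Context: Let $\mathbf M:\mathbb Z_+\times\mathbb Z_+\to\{0,1\}$ be a transition matrix. Put $\mathcal B_0=\{i:\mathbf M(i,j)=1\text{ for some }j\}$, $\mathcal B_n=\{i:\mathbf M(i,j)=1\text{ for some }j\in\mathcal B_{n-1}\}$. $\mathbf M$ is primitive if there exist $\mathbb F\subseteq\mathbb Z_+$ and an integer $K_0\ge0$ such that for all $i,j\in\bigcap_{n\ge0}\mathcal B_n$ there are $\ell_1,\dots,\ell_{K_0}\in\mathbb F$ with $\mathbf M(i,\ell_1)\mathbf M(\ell_1,\ell_2)\cdots\mathbf M(\ell_{K_0},j)=1$. $\boldsymbol\Sigma=\{\mathbf x\in\mathbb Z_+^{\mathbb Z_+}:\mathbf M(x_j,x_{j+1})=1\ \forall j\}$ with metric $d(\mathbf x,\mathbf y)=\lambda^{\min\{j:x_j\neq y_j\}}$, $\lambda\in(0,1)$ fixed; $\sigma$ the left shift; $[i]=\{\mathbf x:x_0=i\}$. $\mathcal M_\sigma$ = $\sigma$-invariant Borel probabilities; $\beta_A=\sup_{\mu\in\mathcal M_\sigma}\int A\,d\mu$. $S_kA=\sum_{j=0}^{k-1}A\circ\sigma^j$, $S_0A=0$. $\mathrm{Var}_k(A)=\sup\{A(\mathbf x)-A(\mathbf y):d(\mathbf x,\mathbf y)\le\lambda^k\}$; $\mathrm{Var}(A)=\sum_{k\ge1}\mathrm{Var}_k(A)$; $A$ is locally H\''older continuous with constant $H_A>0$ if $\mathrm{Var}_k(A)\le H_A\lambda^k$ for all $k\ge1$. *)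

From HB Require Import structures.
From mathcomp Require Import all_boot all_order all_algebra.
From mathcomp Require Import all_classical all_reals all_analysis.

Import Order.TTheory GRing.Theory Num.Theory.
Local Open Scope classical_set_scope.
Local Open Scope ring_scope.

(* transition matrix M : Z_+ x Z_+ -> {0,1}; "M i j = 1" is rendered as M i j = true *)
Definition admissible (M : nat -> nat -> bool) (x : nat -> nat) : Prop :=
  forall j, M (x j) (x j.+1).

Definition Sigma (M : nat -> nat -> bool) : Type := {x : nat -> nat | admissible M x}.

Definition sshift {M : nat -> nat -> bool} (x : Sigma M) : Sigma M :=
  exist (admissible M) (fun j => sval x j.+1) (fun j => svalP x j.+1).

Fixpoint Bn (M : nat -> nat -> bool) (n : nat) : set nat :=
  match n with
  | 0 => [set i | exists j, M i j]
  | n'.+1 => [set i | exists j, Bn M n' j /\ M i j]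
  end.

Definition coreB (M : nat -> nat -> bool) : set nat := \bigcap_(n in setT) Bn M n.

Definition primitive_with (M : nat -> nat -> bool) (F : set nat) (K0 : nat) : Prop :=
  forall i j, coreB M i -> coreB M j ->
    exists l : nat -> nat,
      [/\ l 0 = i, l K0.+1 = j,
          (forall t, (1 <= t <= K0)%N -> F (l t)) &
          (forall t, (t <= K0)%N -> M (l t) (l t.+1))].

Definition cyl (M : nat -> nat -> bool) (i : nat) : set (Sigma M) := [set x | sval x 0 = i].
Definition cylF (M : nat -> nat -> bool) (F : set nat) : set (Sigma M) :=
  \bigcup_(i in F) cyl M i.

Definition dist {R : realType} (lam : R) {M : nat -> nat -> bool} (x y : Sigma M) : R :=
  match pselect (exists j, (fun j => sval x j != sval y j) j) with
  | left h => lam ^+ (ex_minn h)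
  | right _ => 0
  end.

Definition d_open {R : realType} (lam : R) {M : nat -> nat -> bool} (U : set (Sigma M)) : Prop :=
  forall x, U x -> exists2 e : R, 0 < e & forall y, dist lam x y < e -> U y.

(* Sigma with a designated point x0 (only used to equip the type with the
   pointed structure that MathComp-Analysis' measurable types require). *)
Definition SigmaP {M : nat -> nat -> bool} (x0 : Sigma M) : Type := Sigma M.
HB.instance Definition _ M x0 := gen_eqMixin (@SigmaP M x0).
HB.instance Definition _ M x0 := gen_choiceMixin (@SigmaP M x0).
HB.instance Definition _ M x0 := isPointed.Build (@SigmaP M x0) x0.

Definition openSets {R : realType} (lam : R) {M : nat -> nat -> bool} (x0 : Sigma M)
  : set (set (@SigmaP M x0)) := [set U | d_open lam U].

Definition BorelSigma {R : realType} (lam : R) {M : nat -> nat -> bool} (x0 : Sigma M) :=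
  g_sigma_algebraType (openSets lam x0).

Definition shift_invariant {R : realType} {lam : R} {M : nat -> nat -> bool} {x0 : Sigma M}
  (mu : probability (BorelSigma lam x0) R) : Prop :=
  forall B : set (BorelSigma lam x0), measurable B ->
    mu ((@sshift M) @^-1` B) = mu B.

Local Open Scope ereal_scope.

Definition betaA {R : realType} (lam : R) {M : nat -> nat -> bool} (x0 : Sigma M)
  (A : Sigma M -> R) : \bar R :=
  ereal_sup [set r | exists mu : probability (BorelSigma lam x0) R,
                       shift_invariant mu /\ r = \int[mu]_x (A x)%:E].

Definition Sk {R : realType} {M : nat -> nat -> bool} (f : Sigma M -> R) (k : nat) (y : Sigma M) : R :=
  (\sum_(j < k) f (iter j (@sshift M) y))%R.

Definition VarkE {R : realType} (lam : R) {M : nat -> nat -> bool} (f : Sigma M -> \bar R) (k : nat)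
  : \bar R :=
  ereal_sup [set r | exists x y, (dist lam x y <= lam ^+ k)%R /\ r = f x - f y].

Definition Vark {R : realType} (lam : R) {M : nat -> nat -> bool} (A : Sigma M -> R) (k : nat) : \bar R :=
  VarkE lam (fun x => (A x)%:E) k.

Definition Var {R : realType} (lam : R) {M : nat -> nat -> bool} (A : Sigma M -> R) : \bar R :=
  \sum_(1 <= k <oo) Vark lam A k.

Definition supA {R : realType} {M : nat -> nat -> bool} (A : Sigma M -> R) : \bar R :=
  ereal_sup (range (fun x => (A x)%:E)).

Definition infAF {R : realType} {M : nat -> nat -> bool} (F : set nat) (A : Sigma M -> R) : \bar R :=
  ereal_inf [set (A x)%:E | x in cylF M F].

Definition uA {R : realType} (lam : R) {M : nat -> nat -> bool} (x0 : Sigma M)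
  (A : Sigma M -> R) (x : Sigma M) : \bar R :=
  ereal_sup [set r | exists k y, iter k (@sshift M) y = x /\
                      r = (Sk A k y)%:E - (k%:R)%:E * betaA lam x0 A].

From HB Require Import structures.
From mathcomp Require Import all_boot all_order all_algebra.
From mathcomp Require Import all_classical all_reals all_analysis.
From mathcomp Require Import measurable_realfun.
From mathcomp Require Import zify ring lra.
Import Order.TTheory GRing.Theory Num.Theory.
Local Open Scope classical_set_scope.
Local Open Scope ring_scope.
Set Implicit Arguments.
Unset Strict Implicit.
Unset Printing Implicit Defensive.

(* Averaging A along a periodic orbit is integrating against a shift-invariant
   probability, so periodic Birkhoff averages S_p A z / p are at most beta_A.
   If sigma^k y = x, primitivity closes y_0 ... y_(k-1) into a periodic orbit
   of period k + K0 whose last K0 symbols lie in F; replacing y by this orbit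
   changes S_k A by at most Var(A), and the K0 closing symbols cost at most
   K0 (sup A - inf_F A), which bounds u_A.  A preimage of x extended by one
   symbol is a preimage of sigma x, whence A + u_A - u_A o sigma <= beta_A.
   Finally, if x and x' agree on k symbols, a preimage of x can be spliced
   onto x', and the Hoelder bounds along the common past sum geometrically to
   H_A lambda^k / (1 - lambda). *)

Section Subshift.
Variable M : nat -> nat -> bool.
Implicit Types (x y z : Sigma M) (F : set nat).

Lemma Sigma_eq x y : sval x = sval y -> x = y.
Proof.
case: x => fx px; case: y => fy py /= e; subst fy.
by congr exist; apply: Prop_irrelevance.
Qed.

Lemma sval_iter_sshift n x j : sval (iter n (@sshift M) x) j = sval x (n + j)%N.
Proof. by elim: n x j => [//|n IH] x j; rewrite iterS /= IH addSnnS. Qed.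

Lemma coreB_sval x j : coreB M (sval x j).
Proof.
move=> n _; elim: n j => [|n IH] j /=; exists (sval x j.+1) => //.
  exact: (svalP x j).
by split; [exact: IH | exact: (svalP x j)].
Qed.

(* The word [y_0 ... y_(k-1)] is closed up into a loop of length [k + K0]
   through the primitivity chain from [y_(k-1)] back to [y_0]. *)
Lemma periodic_closing F K0 : primitive_with M F K0 ->
  forall y k, (0 < k)%N -> exists z,
  [/\ iter (k + K0) (@sshift M) z = z,
      (forall j, (j < k)%N -> sval z j = sval y j) &
      (forall t, (t < K0)%N -> F (sval z (k + t)%N))].
Proof.
move=> prim y k k_gt0.
have [l [l0 lK lF lM]] := prim _ _ (coreB_sval y k.-1) (coreB_sval y 0).
pose w j := if (j < k.-1)%N then sval y j else l (j - k.-1)%N.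
have w_lt j : (j < k)%N -> w j = sval y j.
  move=> jk; rewrite /w; case: ifP => // /negbT; rewrite -leqNgt => h.
  have -> : j = k.-1 by lia.
  by rewrite subnn l0.
have w_ge j : (k.-1 <= j)%N -> w j = l (j - k.-1)%N.
  by move=> h; rewrite /w ifF //; apply/negbTE; rewrite -leqNgt.
set p := (k + K0)%N.
have p_gt0 : (0 < p)%N by rewrite /p; lia.
have w_p : w p = w 0%N.
  rewrite (w_lt 0%N) // w_ge /p; last lia.
  by rewrite -lK; congr l; lia.
have w_adm i : (i < p)%N -> M (w i) (w i.+1).
  move=> ip; case: (ltnP i k.-1) => h.
  - by rewrite !w_lt; [exact: (svalP y i) | lia | lia].
  - rewrite !w_ge; [|lia|lia].
    have -> : (i.+1 - k.-1 = (i - k.-1).+1)%N by lia.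
    by apply: lM; rewrite /p in ip; lia.
have w_modS i : w (i.+1 %% p)%N = w (i %% p).+1.
  rewrite -addn1 -modnDml addn1; case: (ltnP (i %% p).+1 p) => h.
    by rewrite modn_small.
  have -> : (i %% p).+1 = p by have := ltn_pmod i p_gt0; lia.
  by rewrite modnn w_p.
have adm : admissible M (fun j => w (j %% p)%N).
  by move=> j /=; rewrite w_modS; apply: w_adm; rewrite ltn_pmod.
exists (exist _ _ adm); split.
- by apply: Sigma_eq; apply: funext => j; rewrite sval_iter_sshift /= modnDl.
- by move=> j jk /=; rewrite modn_small ?w_lt // /p; lia.
- move=> t tK /=; rewrite modn_small /p; last lia.
  by rewrite w_ge; [apply: lF | ]; lia.
Qed.

Lemma splice_preimage x x' y n k : (0 < k)%N ->
  (forall j, (j < k)%N -> sval x j = sval x' j) ->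
  iter n (@sshift M) y = x ->
  exists y', iter n (@sshift M) y' = x' /\
             forall j, (j < n + k)%N -> sval y' j = sval y j.
Proof.
move=> k_gt0 agree yx.
pose w j := if (j < n)%N then sval y j else sval x' (j - n)%N.
have w_lt j : (j < n + k)%N -> w j = sval y j.
  rewrite /w => jnk; case: ifP => // /negbT; rewrite -leqNgt => nj.
  by rewrite -agree -?yx ?sval_iter_sshift ?subnKC //; lia.
have adm : admissible M w.
  move=> j; case: (ltnP j.+1 (n + k)) => h.
    by rewrite !w_lt; [exact: (svalP y j) | lia | lia].
  rewrite /w !ifF; try by apply/negbTE; rewrite -leqNgt; lia.
  have -> : (j.+1 - n = (j - n).+1)%N by lia.
  exact: (svalP x' _).
exists (exist _ w adm); split => //.
apply: Sigma_eq; apply: funext => j; rewrite sval_iter_sshift /= /w ifF ?addKn //.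
by apply/negbTE; rewrite -leqNgt leq_addr.
Qed.

End Subshift.

Section Metric.
Variables (R : realType) (lam : R) (M : nat -> nat -> bool).
Hypotheses (lam_gt0 : 0 < lam) (lam_lt1 : lam < 1).
Implicit Types x y : Sigma M.

Lemma dist_le_expr_iff x y k :
  dist lam x y <= lam ^+ k <-> forall j, (j < k)%N -> sval x j = sval y j.
Proof.
rewrite /dist; case: pselect => [ne|eq]; last first.
  split=> [_ j _|_]; last by rewrite exprn_ge0 ?ltW.
  by apply/eqP/negP => /negP xy; apply: eq; exists j.
case: ex_minnP => m xm minm; rewrite ler_iXn2l //; split=> [km j jk|agree].
  by apply/eqP/negP => /negP /minm; lia.
by rewrite leqNgt; apply/negP => mk; move: xm; rewrite agree // eqxx.
Qed.

Lemma geometric_sum_le n : \sum_(i < n) lam ^+ i <= (1 - lam)^-1.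
Proof.
have lam1_gt0 : 0 < 1 - lam by rewrite subr_gt0.
have telescope : (1 - lam) * \sum_(i < n) lam ^+ i = 1 - lam ^+ n.
  elim: n => [|n IH]; first by rewrite big_ord0 mulr0 expr0 subrr.
  by rewrite big_ord_recr /= mulrDr IH exprS; ring.
rewrite -(ler_pM2l lam1_gt0) telescope mulfV ?gt_eqF //.
by rewrite lerBlDr lerDl exprn_ge0 // ltW.
Qed.

Lemma exists_expr_lt e : 0 < e -> exists k, lam ^+ k < e.
Proof.
move=> e_gt0; have := @cvg_expr R lam.
rewrite ger0_norm ?ltW // => /(_ lam_lt1) /cvgr0_norm_lt /(_ e e_gt0) [N _ HN].
by exists N; have := HN N (leqnn N); rewrite /= ger0_norm // exprn_ge0 // ltW.
Qed.

End Metric.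

Section Variation.
Variables (R : realType) (lam : R) (M : nat -> nat -> bool) (A : Sigma M -> R).
Hypotheses (lam_gt0 : 0 < lam) (lam_lt1 : lam < 1).
Implicit Types x y z : Sigma M.
Local Notation agree_upto k x y := (forall j, (j < k)%N -> sval x j = sval y j).

Lemma Vark_ge k x y : dist lam x y <= lam ^+ k -> ((A x - A y)%:E <= Vark lam A k)%E.
Proof. by move=> dxy; apply: ereal_sup_ubound; exists x, y. Qed.

Lemma Vark_ge0 k x : (0 <= Vark lam A k)%E.
Proof. by have := @Vark_ge k x x; rewrite subrr; apply; apply/dist_le_expr_iff. Qed.

Lemma Vark_iter_sshift k n y z : (n < k)%N -> agree_upto k y z ->
  ((A (iter n (@sshift M) y) - A (iter n (@sshift M) z))%:E <= Vark lam A (k - n))%E.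
Proof.
move=> nk yz; apply: Vark_ge; apply/dist_le_expr_iff => // j jk.
by rewrite !sval_iter_sshift yz //; lia.
Qed.

Lemma Sk_sub_le_Var k y z : agree_upto k y z ->
  ((Sk A k y - Sk A k z)%:E <= Var lam A)%E.
Proof.
move=> yz; rewrite /Sk -sumrB -sumEFin.
apply: le_trans (nneseries_lim_ge k.+1 (fun i _ _ => Vark_ge0 i y)).
rewrite big_add1 /= big_mkord (reindex_inj rev_ord_inj) /=.
apply: lee_sum => j _; have := Vark_iter_sshift (ltn_ord (rev_ord j)) yz.
by rewrite /= subKn.
Qed.

Variable HA : R.
Hypothesis HA_gt0 : 0 < HA.
Hypothesis Vark_le : forall k, (1 <= k)%N -> (Vark lam A k <= (HA * lam ^+ k)%:E)%E.

(* The point [x0] only serves to make every [Vark] nonnegative: on an empty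
   shift space they all equal [-oo]. *)
Lemma Var_le (x0 : Sigma M) : (Var lam A <= (HA / (1 - lam))%:E)%E.
Proof.
have Vark0 i : (0 <= Vark lam A i)%E := Vark_ge0 i x0.
have -> : Var lam A = ereal_sup (range (fun n => \sum_(1 <= i < n) Vark lam A i)%E).
  apply/cvg_lim => //; apply: ereal_nondecreasing_cvgn.
  exact: ereal_nondecreasing_series.
apply: ge_ereal_sup => _ [[|n] _ <-].
  by rewrite big_geq // lee_fin divr_ge0 ?subr_ge0 ?ltW.
have geo : \sum_(i < n) lam ^+ i.+1 <= (1 - lam)^-1.
  apply: (le_trans _ (geometric_sum_le lam_gt0 lam_lt1 n)); apply: ler_sum => i _.
  by rewrite exprS ler_piMl ?exprn_ge0 ?ltW.
rewrite big_add1 big_mkord.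
apply: (@le_trans _ _ (\sum_(i < n) (HA * lam ^+ i.+1)%:E)%E).
  by apply: lee_sum => i _; exact: Vark_le.
by rewrite sumEFin lee_fin -mulr_sumr ler_pM2l.
Qed.

Lemma Sk_sub_le_geometric n k y z : (0 < k)%N -> agree_upto (n + k) y z ->
  Sk A n y - Sk A n z <= HA / (1 - lam) * lam ^+ k.
Proof.
move=> k_gt0 yz.
apply: (@le_trans _ _ (\sum_(j < n) HA * lam ^+ k * lam ^+ (n - j))).
  rewrite /Sk -sumrB; apply: ler_sum => j _; have jn := ltn_ord j.
  have kj : (1 <= k + (n - j))%N by lia.
  rewrite -mulrA -exprD -lee_fin; apply: le_trans _ (Vark_le kj).
  have -> : (k + (n - j) = n + k - j)%N by lia.
  by apply: Vark_iter_sshift yz; lia.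
have geo_tail : \sum_(j < n) lam ^+ (n - j) <= (1 - lam)^-1.
  rewrite (reindex_inj rev_ord_inj) /=.
  apply: le_trans _ (geometric_sum_le lam_gt0 lam_lt1 n); apply: ler_sum => j _.
  have -> : (n - (n - j.+1) = j.+1)%N by have := ltn_ord j; lia.
  by rewrite exprS ler_piMl ?exprn_ge0 ?ltW.
rewrite -mulr_sumr [leRHS]mulrAC; apply: ler_wpM2l geo_tail.
by rewrite mulr_ge0 ?exprn_ge0 ?ltW.
Qed.

Lemma holder_measurable (x0 : Sigma M) : measurable_fun setT (A : BorelSigma lam x0 -> R).
Proof.
move=> _; apply: (measurability _ (RGenOInfty.measurableE R)) => //.
move=> /= _ [_ [r ->] <-]; apply: measurableI => //.
apply: sub_sigma_algebra => x /=; rewrite in_itv /= andbT => rAx.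
have e_gt0 : 0 < (A x - r) / HA by rewrite divr_gt0 // subr_gt0.
have [k lamk] := exists_expr_lt lam_gt0 lam_lt1 e_gt0.
exists (lam ^+ k.+1); first by rewrite exprn_gt0.
move=> y dxy; rewrite in_itv /= andbT.
have := le_trans (Vark_ge (ltW dxy)) (Vark_le (ltn0Sn k)); rewrite lee_fin.
have : HA * lam ^+ k.+1 <= HA * lam ^+ k by rewrite ler_pM2l // ler_wiXn2l // ltW.
move: lamk; rewrite ltr_pdivlMr //; lra.
Qed.

End Variation.

Section UniformDirac.
Context d (T : measurableType d) (R : realType) (q : nat) (z : nat -> T).

Definition unif_dirac : set T -> \bar R :=
  mscale ((q.+1)%:R^-1)%:nng (msum (fun j => \d_(z j)) q.+1).
HB.instance Definition _ := Measure.on unif_dirac.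

Local Open Scope ereal_scope.

Lemma unif_diracE U :
  unif_dirac U = ((q.+1)%:R^-1)%R%:E * \sum_(j < q.+1) \d_(z j) U.
Proof. by []. Qed.

Lemma unif_dirac_setT : unif_dirac setT = 1.
Proof.
rewrite unif_diracE (eq_bigr (fun _ => 1)) => [|j _]; last by rewrite diracT.
by rewrite sumEFin sumr_const card_ord -EFinM mulVf.
Qed.

HB.instance Definition _ := Measure_isProbability.Build _ _ _ unif_dirac unif_dirac_setT.

Lemma ge0_integral_unif_dirac (f : T -> \bar R) :
  measurable_fun setT f -> (forall x, 0 <= f x) ->
  \int[unif_dirac]_x f x = ((q.+1)%:R^-1)%R%:E * \sum_(j < q.+1) f (z j).
Proof.
move=> mf f0; rewrite ge0_integral_mscale //= ge0_integral_measure_sum //.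
by congr (_ * _); apply: eq_bigr => j _; rewrite integral_dirac // diracT mul1e.
Qed.

Lemma integral_unif_dirac (f : T -> R) : measurable_fun setT f ->
  \int[unif_dirac]_x (f x)%:E = ((q.+1)%:R^-1 * \sum_(j < q.+1) f (z j))%R%:E.
Proof.
move=> mf; have mfE : measurable_fun setT (EFin \o f) by exact/measurable_EFinP.
rewrite integralE !ge0_integral_unif_dirac //; last 2 first.
- exact: measurable_funeneg.
- exact: measurable_funepos.
under eq_bigr do rewrite funeposE -EFin_max.
under [X in _ - _ * X]eq_bigr do rewrite funenegE -EFin_max.
rewrite !sumEFin -!EFinM -EFinB -mulrBr -sumrB; congr (_ * _)%:E.
by apply: eq_bigr => j _; rewrite !maxEle; case: leP => ?; case: leP => ?; lra.
Qed.

End UniformDirac.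

Section BetaA.
Variables (R : realType) (lam : R) (M : nat -> nat -> bool) (x0 : Sigma M).
Variable A : Sigma M -> R.
Hypothesis mA : measurable_fun setT (A : BorelSigma lam x0 -> R).
Local Notation orbit z := (fun j => iter j (@sshift M) z : BorelSigma lam x0).

Lemma shift_invariant_periodic_orbit z q : iter q.+1 (@sshift M) z = z ->
  shift_invariant (unif_dirac R q (orbit z)).
Proof.
move=> zq B mB /=; rewrite !unif_diracE; congr (_ * _)%E.
have preimE j : \d_(orbit z j) (@sshift M @^-1` B) = \d_(orbit z j.+1) B :> \bar R.
  by rewrite !diracE iterS; congr ((_ : bool)%:R%:E); apply/idP/idP; rewrite !inE.
under eq_bigr do rewrite preimE.
rewrite big_ord_recr big_ord_recl /= -iterS zq.
by rewrite addeC; congr (_ + _)%E; apply: eq_bigr => j _; rewrite add0n.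
Qed.

Lemma periodic_average_le_betaA z q : iter q.+1 (@sshift M) z = z ->
  (((q.+1)%:R^-1 * Sk A q.+1 z)%:E <= betaA lam x0 A)%E.
Proof.
move=> zq; apply: ereal_sup_ubound; exists (unif_dirac R q (orbit z)).
by split; [exact: shift_invariant_periodic_orbit | rewrite integral_unif_dirac].
Qed.

Lemma betaA_le c : (forall x, A x <= c) -> (betaA lam x0 A <= c%:E)%E.
Proof.
move=> Ac; apply: ge_ereal_sup => _ [mu [_ ->]].
have mAE : measurable_fun setT (fun x : BorelSigma lam x0 => (A x)%:E).
  exact/measurable_EFinP.
have int_cst r : (\int[mu]_x r%:E = r%:E)%E.
  by rewrite integral_cst //= probability_setT mule1.
have pos_le : (\int[mu]_x (fun x => (A x)%:E)^\+ x <= (Num.max c 0)%:E)%E.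
  rewrite -int_cst; apply: ge0_le_integral => //; first exact: measurable_funepos.
  move=> x _; rewrite funeposE -EFin_max lee_fin.
  by have Axc := Ac x; rewrite !maxEle; case: (leP (A x) 0); case: (leP c 0); lra.
have neg_ge : ((Num.max (- c) 0)%:E <= \int[mu]_x (fun x => (A x)%:E)^\- x)%E.
  rewrite -int_cst; apply: ge0_le_integral => //; last 2 first.
  - exact: measurable_funeneg.
  - move=> x _; rewrite funenegE -EFin_max lee_fin.
    by have Axc := Ac x; rewrite !maxEle; case: (leP (- A x) 0); case: (leP (- c) 0); lra.
  by move=> x _; rewrite lee_fin le_max lexx orbT.
rewrite integralE; apply: le_trans (leeB pos_le neg_ge) _; rewrite -EFinB lee_fin.
by rewrite !maxEle; case: (leP c 0); case: (leP (- c) 0); lra.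
Qed.

End BetaA.

Lemma EFin_fine_of_bounds (R : realType) (e : \bar R) (r s : R) :
  (r%:E <= e <= s%:E)%E -> e = (fine e)%:E.
Proof.
move=> /andP[re es]; rewrite fineK // fin_numElt.
by rewrite (lt_le_trans (ltNyr r) re) (le_lt_trans es (ltry s)).
Qed.

Section TransferFunction.
Variables (R : realType) (lam : R) (M : nat -> nat -> bool) (F : set nat) (K0 : nat).
Variables (x0 : Sigma M) (A : Sigma M -> R) (HA c : R).
Hypotheses (lam_gt0 : 0 < lam) (lam_lt1 : lam < 1).
Hypothesis prim : primitive_with M F K0.
Hypothesis A_le : forall x, A x <= c.
Hypothesis HA_gt0 : 0 < HA.
Hypothesis Vark_le : forall k, (1 <= k)%N -> (Vark lam A k <= (HA * lam ^+ k)%:E)%E.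
Hypothesis infAF_gtNy : (-oo < infAF F A)%E.

Local Notation beta := (fine (betaA lam x0 A)).
Local Notation u := (uA lam x0 A).
Local Notation uA_bound := (maxe (Var lam A + (K0%:R)%:E * (supA A - infAF F A))
                                 ((K0%:R)%:E * (supA A - betaA lam x0 A)))%E.
Let mA : measurable_fun setT (A : BorelSigma lam x0 -> R) :=
  holder_measurable lam_gt0 lam_lt1 HA_gt0 Vark_le (x0 := x0).

Lemma betaA_EFin : betaA lam x0 A = beta%:E.
Proof.
have [z [zK0 _ _]] := periodic_closing prim x0 (ltn0Sn 0).
rewrite add1n in zK0.
apply: (EFin_fine_of_bounds (r := K0.+1%:R^-1 * Sk A K0.+1 z) (s := c)).
by rewrite (periodic_average_le_betaA mA zK0) (betaA_le mA A_le).
Qed.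

Lemma supA_EFin : supA A = (fine (supA A))%:E.
Proof.
apply: (EFin_fine_of_bounds (r := A x0) (s := c)); apply/andP; split.
  by apply: ereal_sup_ubound; exists x0.
by apply: ge_ereal_sup => _ [x _ <-]; rewrite lee_fin.
Qed.

Lemma A_le_supA x : A x <= fine (supA A).
Proof. by rewrite -lee_fin -supA_EFin; apply: ereal_sup_ubound; exists x. Qed.

Lemma betaA_le_supA : beta <= fine (supA A).
Proof. by rewrite -lee_fin -betaA_EFin; exact: betaA_le mA _ A_le_supA. Qed.

Lemma Var_EFin : Var lam A = (fine (Var lam A))%:E.
Proof.
apply: (EFin_fine_of_bounds (r := 0) (s := HA / (1 - lam))); apply/andP; split.
  by apply: nneseries_ge0 => i _ _; exact: Vark_ge0.
exact: Var_le.
Qed.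

Lemma infAF_le x : cylF M F x -> (infAF F A <= (A x)%:E)%E.
Proof. by move=> Fx; apply: ereal_inf_lbound; exists x. Qed.

Lemma infAF_EFin : (0 < K0)%N -> infAF F A = (fine (infAF F A))%:E.
Proof.
move=> K0_gt0; have [z [_ _ zF]] := periodic_closing prim x0 (ltn0Sn 0).
have Fz1 : cylF M F (sshift z) by exists (sval z 1); [exact: zF | ].
by rewrite fineK // fin_numElt infAF_gtNy (le_lt_trans (infAF_le Fz1) (ltry _)).
Qed.

Lemma Sk_sub_betaA_le k y : (0 < k)%N ->
  ((Sk A k y - k%:R * beta)%:E <= Var lam A + (K0%:R)%:E * (supA A - infAF F A))%E.
Proof.
move=> k_gt0; have [z [zper zy zF]] := periodic_closing prim y k_gt0.
have z_avg : Sk A (k + K0) z <= k%:R * beta + K0%:R * beta.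
  have kK0 : (k + K0 = (k + K0).-1.+1)%N by rewrite prednK ?addn_gt0 ?k_gt0.
  move: zper; rewrite kK0 => /(periodic_average_le_betaA mA) avg.
  rewrite betaA_EFin lee_fin -kK0 ler_pdivrMl ?ltr0n ?addn_gt0 ?k_gt0 // in avg.
  by rewrite -kK0 -mulrDl -natrD.
have yz : Sk A k y - Sk A k z <= fine (Var lam A).
  by rewrite -lee_fin -Var_EFin; apply: Sk_sub_le_Var => // j /zy.
case: (posnP K0) => [K0_0 | K0_gt0].
  move: z_avg; rewrite K0_0 addn0 mul0r addr0 mul0e adde0 Var_EFin lee_fin.
  by lra.
have Sk_split : Sk A (k + K0) z =
                Sk A k z + \sum_(t < K0) A (iter (k + t) (@sshift M) z).
  by rewrite /Sk big_split_ord.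
have term_le (t : 'I_K0) :
    beta - A (iter (k + t) (@sshift M) z) <= fine (supA A) - fine (infAF F A).
  have Fz : cylF M F (iter (k + t) (@sshift M) z).
    by exists (sval z (k + t)); [exact: zF | rewrite /cyl /= sval_iter_sshift addn0].
  have := infAF_le Fz; rewrite infAF_EFin // lee_fin.
  by have := betaA_le_supA; lra.
have : \sum_(t < K0) (beta - A (iter (k + t) (@sshift M) z))
         <= \sum_(t < K0) (fine (supA A) - fine (infAF F A)).
  by apply: ler_sum => t _; exact: term_le.
rewrite sumrB !sumr_const !card_ord -[beta *+ K0]mulr_natl -[(_ - _) *+ K0]mulr_natl.
rewrite Var_EFin supA_EFin (infAF_EFin K0_gt0) -EFinB -EFinM -EFinD lee_fin.
by lra.
Qed.

Lemma uA_ge k y : ((Sk A k y - k%:R * beta)%:E <= u (iter k (@sshift M) y))%E.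
Proof. by apply: ereal_sup_ubound; exists k, y; rewrite betaA_EFin -EFinM -EFinB. Qed.

Lemma uA_le (B : \bar R) x :
  (forall k y, iter k (@sshift M) y = x -> ((Sk A k y - k%:R * beta)%:E <= B)%E) ->
  (u x <= B)%E.
Proof.
move=> B_ge; apply: ge_ereal_sup => _ [k [y [yx ->]]].
by rewrite betaA_EFin -EFinM -EFinB; exact: B_ge yx.
Qed.

Lemma uA_ge0 x : (0 <= u x)%E.
Proof. by have := @uA_ge 0 x; rewrite /Sk big_ord0 mul0r subr0. Qed.

Lemma uA_le_bound x : (u x <= uA_bound)%E.
Proof.
apply: uA_le => -[|k] y _; rewrite le_max; apply/orP; [right | left].
  rewrite /Sk big_ord0 mul0r subr0 supA_EFin betaA_EFin -EFinB -EFinM lee_fin.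
  by rewrite mulr_ge0 ?subr_ge0 ?betaA_le_supA.
exact: Sk_sub_betaA_le.
Qed.

Lemma uA_bound_lt_pinfty : (uA_bound < +oo)%E.
Proof.
case: (posnP K0) => [-> | K0_gt0].
  by rewrite !mul0e adde0 Var_EFin -EFin_max ltry.
rewrite Var_EFin supA_EFin (infAF_EFin K0_gt0) betaA_EFin.
by rewrite -!EFinB -!EFinM -EFinD -EFin_max ltry.
Qed.

Lemma uA_EFin x : u x = (fine (u x))%:E.
Proof.
rewrite fineK // fin_numElt (lt_le_trans (ltNyr 0) (uA_ge0 x)).
exact: le_lt_trans (uA_le_bound x) uA_bound_lt_pinfty.
Qed.

Lemma A_add_uA_sub_le x : ((A x)%:E + u x - u (sshift x) <= betaA lam x0 A)%E.
Proof.
suff ux_le : fine (u x) <= fine (u (sshift x)) - A x + beta.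
  by rewrite (uA_EFin x) (uA_EFin (sshift x)) betaA_EFin -EFinD lee_fin; lra.
rewrite -lee_fin -uA_EFin; apply: uA_le => k y yx; rewrite lee_fin.
have := @uA_ge k.+1 y; rewrite iterS yx uA_EFin lee_fin /Sk big_ord_recr /= yx -natr1.
by rewrite -/(Sk A k y) mulrDl mul1r; lra.
Qed.

Lemma VarkE_uA_le k : (1 <= k)%N -> (VarkE lam u k <= (HA / (1 - lam) * lam ^+ k)%:E)%E.
Proof.
move=> k_gt0; apply: ge_ereal_sup => _ [x [x' [dxx' ->]]].
have xx' := (dist_le_expr_iff lam_gt0 lam_lt1 _ _ _).1 dxx'.
suff ux_le : fine (u x) <= fine (u x') + HA / (1 - lam) * lam ^+ k.
  by rewrite (uA_EFin x) (uA_EFin x') -EFinB lee_fin; lra.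
rewrite -lee_fin -uA_EFin; apply: uA_le => n y yx.
have [y' [y'x' y'y]] := splice_preimage k_gt0 xx' yx.
have := @uA_ge n y'; rewrite y'x' uA_EFin !lee_fin.
have yy' j : (j < n + k)%N -> sval y j = sval y' j by move=> /y'y.
have := Sk_sub_le_geometric lam_gt0 lam_lt1 HA_gt0 Vark_le k_gt0 yy'.
by lra.
Qed.

End TransferFunction.

Theorem mainTheorem5 (R : realType) (lam : R) (M : nat -> nat -> bool)
  (F : set nat) (K0 : nat) (x0 : Sigma M) (A : Sigma M -> R) (HA : R) :
  0 < lam < 1 ->
  primitive_with M F K0 ->
  (exists c : R, forall x, A x <= c) ->
  0 < HA ->
  (forall k : nat, (1 <= k)%N -> (Vark lam A k <= (HA * lam ^+ k)%:E)%E) ->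
  (-oo < infAF F A)%E ->
  (forall x : Sigma M,
     (0 <= uA lam x0 A x)%E /\
     (uA lam x0 A x <=
        maxe (Var lam A + (K0%:R)%:E * (supA A - infAF F A))
             ((K0%:R)%:E * (supA A - betaA lam x0 A)))%E) /\
  (forall x : Sigma M,
     ((A x)%:E + uA lam x0 A x - uA lam x0 A (sshift x) <= betaA lam x0 A)%E) /\
  (forall k : nat, (1 <= k)%N ->
     (VarkE lam (uA lam x0 A) k <= (HA / (1 - lam) * lam ^+ k)%:E)%E).
Proof.
move=> /andP[lam_gt0 lam_lt1] prim [c A_le] HA_gt0 Vark_le infAF_gtNy.
split; [move=> x; split | split; [move=> x | move=> k k_gt0]].
- exact: (uA_ge0 x0 lam_gt0 lam_lt1 prim A_le HA_gt0 Vark_le x).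
- exact: (uA_le_bound x0 lam_gt0 lam_lt1 prim A_le HA_gt0 Vark_le infAF_gtNy x).
- exact: (A_add_uA_sub_le x0 lam_gt0 lam_lt1 prim A_le HA_gt0 Vark_le infAF_gtNy x).
- exact: (VarkE_uA_le x0 lam_gt0 lam_lt1 prim A_le HA_gt0 Vark_le infAF_gtNy k_gt0).
Qed.
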